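(* Let $G$ be a fullerene graph, $C$ a longest cycle of $G$, and apply the discharging procedure described in the context. If $f=v_1v_2v_3v_4v_5v_6$ is a white face of $G$ such that the edges $v_2v_3$ and $v_5v_6$ are contained in $C$, then the final amount of charge of $f$ is $1$ unit.
   Context: A fullerene graph is a cubic, planar, $3$-connected graph embedded in the plane in which every face has size five or six. Fix a longest cycle $C$ of $G$; vertices on $C$ are black, the others white. Every face of $G$ is incident with at most two white vertices. A face incident with exactly two white vertices is called white; a face incident with no white vertex is called black. For a face $f$ with vertices $v_1,\dots,v_k$ in cyclic order, $f_{i,i+1}$ denotes the face other than $f$ containing the edge $v_iv_{i+1}$ (indices modulo $k$). Discharging: each white vertex receives $3$ units of charge and sends $1$ unit to each of its three incident faces (so each face initially has charge equal to its number of incident white vertices). Then charge is redistributed by two rules, where $f_0=v_1\dots v_6$ is a black face of size six and indices are modulo $6$. Rule A: $f_0$ receives $1/2$ unit from $f_{i,i+1}$ if the path $v_{i-1}v_iv_{i+1}v_{i+2}$ is contained in $C$ and the face $f_{i,i+1}$ is white. Rule B: $f_0$ receives $1$ unit from $f_{i,i+1}$ if the edge $v_iv_{i+1}$ is contained in $C$, neither $v_{i-1}v_i$ nor $v_{i+1}v_{i+2}$ is contained in $C$, and the face $f_{i,i+1}$ is white. The final charge of a face is its initial charge plus all charge received minus all charge sent under Rules A and B. *)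

(* A fullerene graph is encoded as a plane (genus 0)
   combinatorial map: darts D, vertices V, tail : D -> V, an edge involution
   e, and a vertex rotation n (a permutation whose orbits are exactly the
   fibres of tail).  Faces are the orbits of fphi := n \o e. *)
From mathcomp Require Import all_boot all_order all_algebra.
Set Implicit Arguments.
Unset Strict Implicit.
Unset Printing Implicit Defensive.
Import GRing.Theory Num.Theory.
Local Open Scope ring_scope.

Section Fullerene.
Variables (V D : finType) (tail : D -> V) (e n : D -> D).

Definition fphi (x : D) : D := n (e x).

Definition adj : rel V :=
  fun u v => [exists x, (tail x == u) && (tail (e x) == v)].

Definition adj_avoid (S : {set V}) : rel V :=
  fun u v => [&& adj u v, u \notin S & v \notin S].

Definition three_connected : Prop :=
  (3 < #|V|)%N /\
  forall S : {set V}, (#|S| <= 2)%N ->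
    forall u v, u \notin S -> v \notin S -> connect (adj_avoid S) u v.

Definition fullerene : Prop :=
  (forall x, e (e x) = x) /\ (forall x, e x != x) /\
  injective n /\
  (forall x y, (tail x == tail y) = fconnect n x y) /\
  (forall v, exists x, tail x = v) /\
  (* simple graph: no loops, no multiple edges *)
  (forall x, tail (e x) != tail x) /\
  (forall x y, tail x = tail y -> tail (e x) = tail (e y) -> x = y) /\
  (forall x, order n x = 3%N) /\
  (forall x, (order fphi x == 5%N) || (order fphi x == 6%N)) /\
  (* planar (genus 0): Euler's formula V - E + F = 2, with E = #|D|/2 *)
  (2 * (#|V| + fcard fphi (predT : pred D)) = #|D| + 4)%N /\
  three_connected.

Definition is_gcycle (c : seq V) : bool :=
  [&& uniq c, (2 < size c)%N & cycle adj c].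

Definition longest_cycle (C : seq V) : Prop :=
  is_gcycle C /\ forall c, is_gcycle c -> (size c <= size C)%N.

Variable C : seq V.

Definition white (v : V) : bool := v \notin C.

Definition nwhite (x : D) : nat :=
  #|[set v : V | white v & [exists y, fconnect fphi x y && (tail y == v)]]|.

Definition white_face (x : D) : bool := nwhite x == 2%N.
Definition black_face (x : D) : bool := nwhite x == 0%N.

Definition cedge (u v : V) : bool :=
  [&& u \in C, v \in C & (next C u == v) || (next C v == u)].

Definition dart_in_C (x : D) : bool := cedge (tail x) (tail (e x)).

(* Charge received by the (black hexagonal) face of dart x from the face on
   the other side of the edge of x.  With x = v_i v_{i+1}, finv fphi x is
   v_{i-1} v_i and fphi x is v_{i+1} v_{i+2}. *)
Definition ruleA (x : D) : rat :=
  if [&& black_face x, order fphi x == 6%N, white_face (e x),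
         dart_in_C (finv fphi x), dart_in_C x & dart_in_C (fphi x)]
  then 1 / 2 else 0.

Definition ruleB (x : D) : rat :=
  if [&& black_face x, order fphi x == 6%N, white_face (e x),
         dart_in_C x, ~~ dart_in_C (finv fphi x) & ~~ dart_in_C (fphi x)]
  then 1 else 0.

Definition transfer (x : D) : rat := ruleA x + ruleB x.

(* final charge of the face of x: initial charge (number of incident white
   vertices), plus everything received across its edges, minus everything
   sent across its edges *)
Definition final_charge (x : D) : rat :=
  (nwhite x)%:R + \sum_(y | fconnect fphi x y) (transfer y - transfer (e y)).

End Fullerene.

From mathcomp Require Import all_boot all_order all_algebra.
From mathcomp Require Import ring.
Set Implicit Arguments.
Unset Strict Implicit.
Unset Printing Implicit Defensive.

(* A white face
   has exactly two white vertices, here v1 and v4, so v2v3 and v5v6 are the only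
   edges of f on C and f sends charge only across them.  Up to reversing C, C
   runs v2 -> v3 and v5 -> v6 (the other orientation would let C be rerouted
   through v1 and v4).  Let w2, w3 be the other C-neighbours of v2, v3, so that
   the face g beyond v2v3 is bounded by w3 v3 v2 w2 and a path P from w2 to w3.
   Trading the edges w2v2, v3w3, v5v6 of C for P and the path v5 v4 v3 v2 v1 v6
   gains v1, v4 and the white inner vertices of P, while a black inner vertex
   of P next to w2 or w3 must be a C-neighbour of it and costs only itself.  As
   C is longest, P has exactly two inner vertices, both black: g is a black
   hexagon whose edges at v2v3 lie on C, so Rule A moves 1/2 from f to g and
   Rule B does not apply.  The same holds across v5v6, so f keeps 2 - 1/2 - 1/2. *)

Lemma order_fconnect (T : finType) (f : T -> T) x y :
  injective f -> fconnect f x y -> order f y = order f x.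
Proof.
move=> f_inj xy; apply: eq_card => z.
by rewrite -!topredE /= (same_connect (fconnect_sym f_inj) xy).
Qed.

Section CubicMap.
Variables (V D : finType) (tail : D -> V) (e n : D -> D).
Hypothesis G : fullerene tail e n.

Local Notation fp := (fphi e n).
Local Notation hd x := (tail (e x)).
Local Notation adj := (adj tail e).

Lemma edgeK : involutive e. Proof. by case: G. Qed.
Lemma vrot_inj : injective n. Proof. by case: G => _ [_ []]. Qed.
Lemma eq_tail_vrot x y : (tail x == tail y) = fconnect n x y.
Proof. by case: G => _ [_ [_ []]]. Qed.
Lemma hd_neq_tail x : hd x != tail x.
Proof. by case: G => _ [_ [_ [_ [_ []]]]]. Qed.
Lemma dart_inj x y : tail x = tail y -> hd x = hd y -> x = y.
Proof. by case: G => _ [_ [_ [_ [_ [_ []]]]]] => inj _; apply: inj. Qed.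
Lemma order_vrot x : order n x = 3.
Proof. by case: G => _ [_ [_ [_ [_ [_ [_ []]]]]]]. Qed.
Lemma order_fphi x : (order fp x == 5) || (order fp x == 6).
Proof. by case: G => _ [_ [_ [_ [_ [_ [_ [_ []]]]]]]]. Qed.

Lemma tail_vrot x : tail (n x) = tail x.
Proof. by apply/esym/eqP; rewrite eq_tail_vrot fconnect1. Qed.
Lemma vrot3 x : n (n (n x)) = x.
Proof. by have := iter_order vrot_inj x; rewrite order_vrot. Qed.
Lemma orbit_vrot x : orbit n x = [:: x; n x; n (n x)].
Proof. by rewrite /orbit order_vrot. Qed.

Lemma tail_fphi x : tail (fp x) = hd x. Proof. exact: tail_vrot. Qed.
Lemma fphi_inj : injective fp.
Proof. by move=> x y /vrot_inj/(congr1 e); rewrite !edgeK. Qed.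

Lemma fphi_edge z y : fp z = y -> e z = n (n y).
Proof. by move=> <-; rewrite vrot3. Qed.

Lemma hd_vrot_neq x : hd (n x) != hd x.
Proof.
apply/eqP => h; have := orbit_uniq n x.
by rewrite orbit_vrot (dart_inj (tail_vrot x) h) /= inE eqxx.
Qed.

Lemma hd_fphi_neq_tail x : hd (fp x) != tail x.
Proof. by rewrite -{2}(edgeK x); apply: hd_vrot_neq. Qed.

Lemma adj_sym : symmetric adj.
Proof.
by move=> u v; apply/existsP/existsP => -[x /andP[/eqP<- /eqP<-]];
  exists (e x); rewrite edgeK !eqxx.
Qed.

Lemma adjP u v : reflect (exists x, tail x = u /\ hd x = v) (adj u v).
Proof.
apply: (iffP existsP) => [[x /andP[/eqP ? /eqP ?]]|[x [<- <-]]]; first by exists x.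
by exists x; rewrite !eqxx.
Qed.

Lemma adj_dart x : adj (tail x) (hd x).
Proof. by apply/adjP; exists x. Qed.

Lemma adj_nbrs z u : adj (tail z) u -> u \in [:: hd z; hd (n z); hd (n (n z))].
Proof.
case/adjP=> x [/eqP tzx <-]; rewrite eq_sym eq_tail_vrot fconnect_orbit in tzx.
by have := map_f (fun y => hd y) tzx; rewrite orbit_vrot.
Qed.

Lemma cubic_adj v a b c u : adj v a -> adj v b -> adj v c -> adj v u ->
  a != b -> a != c -> b != c -> [\/ u = a, u = b | u = c].
Proof.
move=> va vb vc vu ab ac bc; case/adjP: (va) => z [tz _]; subst v.
move: va vb vc vu => /adj_nbrs az /adj_nbrs bz /adj_nbrs cz /adj_nbrs uz.
have abc : uniq [:: a; b; c] by rewrite /= !inE negb_or ab ac bc.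
have sub : {subset [:: a; b; c] <= [:: hd z; hd (n z); hd (n (n z))]}.
  by apply/allP; rewrite /= az bz cz.
have [_ eq_abc] := uniq_min_size abc sub (leqnn 3).
by move: uz; rewrite -eq_abc !inE => /or3P[] /eqP; [apply: Or31|apply: Or32|apply: Or33].
Qed.
End CubicMap.

Section NextInCycle.
Variable T : eqType.
Implicit Types (s : seq T) (x y : T).

Lemma next_cat_head s1 s2 x : uniq (s1 ++ x :: s2) -> s2 != [::] ->
  next (s1 ++ x :: s2) x = head x s2.
Proof.
move=> U; case: s2 U => [|y s2] U _ //=.
have xs1 : x \notin s1 by move: U; rewrite cat_uniq /= => /and3P[_ /norP[]].
rewrite next_nth mem_cat mem_head orbT.
case: s1 U xs1 => [|z s1] U xs1 /=; first by rewrite eqxx.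
move: xs1; rewrite inE negb_or eq_sym => /andP[/negbTE -> xs1].
by rewrite index_cat (negbTE xs1) /= eqxx addn0 nth_cat ltnNge leqnSn /= subSnn.
Qed.

Lemma prev_head x s : uniq (x :: s) -> prev (x :: s) x = last x s.
Proof.
case/andP=> xs _; rewrite prev_nth mem_head /= memNindex //.
by rewrite (last_nth x).
Qed.

Lemma next_last x s : uniq (x :: s) -> next (x :: s) (last x s) = x.
Proof. by move=> U; rewrite -(prev_head U) (next_prev U). Qed.

Lemma rot_to_next2 s a c : uniq s -> a \in s -> c \in s ->
  c != a -> c != next s a -> next s c != a ->
  exists i A B, rot i s = a :: next s a :: A ++ c :: next s c :: B.
Proof.
move=> U /rot_to[i t Ri] cs ca cna nca.
have Ut : uniq (a :: t) by rewrite -Ri rot_uniq.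
have nR x : next (a :: t) x = next s x by rewrite -Ri (next_rot i U).
have ct : c \in t by move: cs; rewrite -(mem_rot i) Ri inE (negbTE ca).
case: t Ri Ut nR ct => [//|b t] Ri Ut nR ct.
have nab : next s a = b by rewrite -nR /= eqxx.
rewrite nab in cna nca *; move: ct; rewrite inE (negbTE cna) /= => ct.
case/splitPr: ct Ri Ut nR => A [|y B] Ri Ut nR.
  have := next_last Ut; rewrite last_cons last_cat => nc.
  by move: nca; rewrite -nR -cat_cons nc eqxx.
exists i, A, B; rewrite Ri; congr (_ :: _ :: _ ++ _ :: _ :: _).
by rewrite -nR (next_cat_head (s1 := a :: b :: A)).
Qed.
End NextInCycle.

Section LongestCycle.
Variables (V D : finType) (tail : D -> V) (e n : D -> D) (C : seq V).
Hypotheses (G : fullerene tail e n) (L : longest_cycle tail e C).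
Local Notation hd x := (tail (e x)).
Local Notation adj := (adj tail e).

Lemma longest_uniq : uniq C. Proof. by case: L => /and3P[]. Qed.
Lemma longest_size : 2 < size C. Proof. by case: L => /and3P[]. Qed.
Lemma longest_adj : cycle adj C. Proof. by case: L => /and3P[]. Qed.

Lemma no_longer_cycle W X s : uniq W -> all [predC C] W ->
  perm_eq (W ++ C) (X ++ s) -> size X < size W -> cycle adj s -> False.
Proof.
move=> UW WC pe ltXW cs; have [_ /(_ s) max] := L.
have WCdisj : ~~ has (mem W) C.
  by apply/hasPn => x xC; apply: contraTN xC => /(allP WC).
have : uniq (X ++ s) by rewrite -(perm_uniq pe) cat_uniq UW WCdisj longest_uniq.
rewrite cat_uniq => /and3P[_ _ Us].
have ltCs : size C < size s.
  have := perm_size pe; rewrite !size_cat => sz.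
  by rewrite -(ltn_add2l (size X)) -sz ltn_add2r.
have := max; rewrite /is_gcycle Us cs (ltn_trans longest_size ltCs) => /(_ isT).
by rewrite leqNgt ltCs.
Qed.

Lemma adj_next x : x \in C -> adj x (next C x).
Proof. exact: next_cycle longest_adj. Qed.
Lemma adj_prev x : x \in C -> adj x (prev C x).
Proof. by move=> xC; rewrite (adj_sym G) //; apply: prev_cycle longest_adj xC. Qed.

Lemma next_neq_prev x : x \in C -> next C x != prev C x.
Proof.
case/rot_to=> i s Ri; rewrite -(next_rot i longest_uniq) -(prev_rot i longest_uniq) Ri.
have U : uniq (x :: s) by rewrite -Ri rot_uniq longest_uniq.
have : 2 < size (x :: s) by rewrite -Ri size_rot longest_size.
rewrite prev_head //; case: s {Ri} U => [|y [|y' s]] //= U _; rewrite eqxx.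
by apply/eqP => yl; case/and4P: U => _ /negP; rewrite yl mem_last.
Qed.

Lemma cedgeP u v : u \in C -> reflect (next C u = v \/ prev C u = v) (cedge C u v).
Proof.
move=> uC; rewrite /cedge uC; apply: (iffP and3P) => [[_ vC /orP[]/eqP]|].
- by left.
- by move=> <-; right; rewrite (prev_next longest_uniq).
case=> <-; rewrite ?mem_next ?mem_prev uC ?eqxx ?orbT //.
by rewrite (next_prev longest_uniq) eqxx orbT.
Qed.

(* Inserting x between y and next C y would lengthen C. *)
Lemma white_detour x y : x \notin C -> y \in C -> adj x y -> adj x (next C y) -> False.
Proof.
move=> xC yC xy xz; have /rot_to[i s Ri] : next C y \in C by rewrite mem_next.
have U : uniq (next C y :: s) by rewrite -Ri rot_uniq longest_uniq.
have ly : last (next C y) s = y.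
  by rewrite -prev_head // -Ri (prev_rot i longest_uniq) (prev_next longest_uniq).
have := longest_adj; rewrite -(rot_cycle i) Ri /= rcons_path ly => /andP[ps _].
apply: (@no_longer_cycle [:: x] [::] (x :: next C y :: s)) => //=.
- by rewrite andbT.
- by rewrite perm_cons -Ri perm_sym perm_rot.
by rewrite xz rcons_path ps ly (adj_sym G).
Qed.

Lemma unique_white_nbr u a b : u \in C -> a \notin C -> b \notin C ->
  adj u a -> adj u b -> a = b.
Proof.
move=> uC aC bC ua ub.
have neq w : w \notin C -> w != next C u /\ w != prev C u.
  by move=> wC; split; apply: contraNneq wC => ->; rewrite ?mem_next ?mem_prev.
have [an ap] := neq a aC; have [bn bp] := neq b bC.
have := cubic_adj G ua (adj_next uC) (adj_prev uC) ub an ap (next_neq_prev uC).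
by case=> // E; [move: bn | move: bp]; rewrite E eqxx.
Qed.

Lemma cedge_other_nbrs z : tail z \in C -> hd z \notin C ->
  cedge C (tail z) (hd (n z)) && cedge C (tail z) (hd (n (n z))).
Proof.
move=> zC hzC.
have other w : w \in C -> adj (tail z) w -> w \in [:: hd (n z); hd (n (n z))].
  move=> wC /(adj_nbrs G); rewrite inE => /predU1P[E|//].
  by move: hzC; rewrite -E wC.
have := other (next C (tail z)); rewrite mem_next zC => /(_ isT (adj_next zC)).
have := other (prev C (tail z)); rewrite mem_prev zC => /(_ isT (adj_prev zC)).
have np := next_neq_prev zC; rewrite !inE.
by case/orP=> /eqP pE /orP[]/eqP nE; move: np; rewrite pE nE ?eqxx // => _;
  apply/andP; split; apply/cedgeP; auto.
Qed.

Lemma cedge_sym u v : cedge C u v = cedge C v u.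
Proof. by rewrite /cedge andbCA orbC. Qed.

Lemma cedge_of_nbrs u p q : u \in C -> adj u p -> adj u q -> p != q ->
  cedge C u p || cedge C u q.
Proof.
move=> uC up uq pq; apply/norP => -[/(cedgeP _ uC) np /(cedgeP _ uC) nq].
have pn : p != next C u by apply/eqP => E; apply: np; left.
have qn : q != next C u by apply/eqP => E; apply: nq; left.
case: (cubic_adj G up uq (adj_next uC) (adj_prev uC) pq pn qn) => E.
- by apply: np; right.
- by apply: nq; right.
- by move: (next_neq_prev uC); rewrite E eqxx.
Qed.
End LongestCycle.

Section Rerouting.
Variables (V D : finType) (tail : D -> V) (e n : D -> D) (C : seq V).
Hypotheses (G : fullerene tail e n) (L : longest_cycle tail e C).
Local Notation adj := (adj tail e).

Variables v1 v2 v3 v4 v5 v6 : V.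
Hypotheses (v1C : v1 \notin C) (v4C : v4 \notin C).
Hypotheses (a12 : adj v1 v2) (a34 : adj v3 v4) (a45 : adj v4 v5) (a61 : adj v6 v1).

Ltac split_and := repeat match goal with H : is_true (_ && _) |- _ => case/andP: H => ? ? end.
Ltac adj_by_hyps := repeat (apply/andP; split); try done; by rewrite (adj_sym G).

(* The cycle v6 U1 Q T2 v5 v4 v3 v2 v1 drops the vertices of U2 and T1 from C
   and gains v4, v1 and those of Q. *)
Lemma splice_not_longest A B U1 U2 T1 T2 Q :
  perm_eq (v2 :: v3 :: A ++ v5 :: v6 :: B) C ->
  cycle adj (v2 :: v3 :: A ++ v5 :: v6 :: B) ->
  B = U1 ++ U2 -> A = T1 ++ T2 -> all [predC C] Q -> uniq (Q ++ [:: v4; v1]) ->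
  path adj (last v6 U1) (rcons Q (head v5 T2)) -> size (U2 ++ T1) < size Q + 2 ->
  False.
Proof.
move=> RC Rc BE AE QC UQ pQ lt; subst A B.
apply: (no_longer_cycle L (W := Q ++ [:: v4; v1]) (X := U2 ++ T1)
  (s := v6 :: U1 ++ Q ++ T2 ++ [:: v5; v4; v3; v2; v1])) => //.
- by rewrite all_cat QC /= v4C v1C.
- rewrite -(perm_cat2l (Q ++ [:: v4; v1])) perm_sym in RC.
  apply: perm_trans RC _; apply/permP => p.
  rewrite /= !count_cat /= !count_cat /= (count_cat p U1 U2).
  ring.
- by rewrite size_cat.
clear RC; move: Rc pQ; rewrite /cycle; case: T2 => [|t T2];
  rewrite /= !(rcons_cat, rcons_path, cat_path, last_cat) /=
    !(cat_path, last_cat) /= => Rc pQ; split_and;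
  adj_by_hyps.
Qed.

(* Otherwise v2 v1 v6 (rev A) v3 v4 v5 B is a longer cycle. *)
Lemma swapped_edge_not_longest A B : v1 != v4 ->
  perm_eq (v2 :: v3 :: A ++ v6 :: v5 :: B) C ->
  cycle adj (v2 :: v3 :: A ++ v6 :: v5 :: B) -> False.
Proof.
move=> v14 RC Rc.
apply: (no_longer_cycle L (W := [:: v1; v4]) (X := [::])
  (s := v2 :: v1 :: v6 :: rev A ++ v3 :: v4 :: v5 :: B)) => //.
- by rewrite /= inE v14.
- by rewrite /= v1C v4C.
- rewrite -(perm_cat2l [:: v1; v4]) perm_sym in RC; apply: perm_trans RC _.
  by apply/permP => p; rewrite /= !count_cat /= count_rev; ring.
have pA : path adj v3 (rcons A v6).
  by move: Rc; rewrite rcons_path /cycle /= rcons_cat cat_path /= => /and3P[_ -> /andP[-> _]].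
have prA : path adj v6 (rcons (rev A) v3).
  have := rev_path adj v3 (rcons A v6); rewrite last_rcons belast_rcons rev_cons => ->.
  by apply: sub_path pA => x y; rewrite (adj_sym G).
move: Rc prA; rewrite /cycle /= !(rcons_cat, rcons_path, cat_path, last_cat) /=
  ?(cat_path, last_cat) /= => Rc prA; split_and; adj_by_hyps.
Qed.
End Rerouting.

Section Face.
Variables (V D : finType) (tail : D -> V) (e n : D -> D) (C : seq V) (d : D).
Hypotheses (G : fullerene tail e n) (L : longest_cycle tail e C).
Local Notation fp := (fphi e n).
Local Notation hd x := (tail (e x)).
Local Notation adj := (adj tail e).
Local Notation x1 := (fp d).
Local Notation x2 := (fp x1).
Local Notation x3 := (fp x2).
Local Notation x4 := (fp x3).
Local Notation x5 := (fp x4).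
Local Notation v1 := (tail d).
Local Notation v2 := (tail x1).
Local Notation v3 := (tail x2).
Local Notation v4 := (tail x3).
Local Notation v5 := (tail x4).
Local Notation v6 := (tail x5).
Hypotheses (hexagon : order fp d = 6) (two_white : nwhite tail e n C d = 2).
Hypotheses (C23 : dart_in_C tail e C x1) (C56 : dart_in_C tail e C x4).

Lemma face_closed : fp x5 = d.
Proof. by have := iter_order (fphi_inj G) d; rewrite hexagon. Qed.

Lemma mem_face y : fconnect fp d y -> y \in [:: d; x1; x2; x3; x4; x5].
Proof. by rewrite fconnect_orbit /orbit hexagon. Qed.

Lemma face_black : [/\ v2 \in C, v3 \in C, v5 \in C & v6 \in C].
Proof.
by move: C23 C56; rewrite /dart_in_C /cedge -!(tail_fphi G) => /and3P[-> -> _] /and3P[-> -> _].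
Qed.

Lemma face_white : [/\ v1 \notin C, v4 \notin C & v1 != v4].
Proof.
have [b2 b3 b5 b6] := face_black.
set S := [set v | white C v & [exists y, fconnect fp d y && (tail y == v)]].
have sub : S \subset [set v1; v4].
  apply/subsetP => v; rewrite !inE => /andP[vC /existsP[y /andP[/mem_face yf /eqP ty]]].
  have : all [predU mem C & mem [:: v1; v4]] [seq tail y | y <- [:: d; x1; x2; x3; x4; x5]].
    by rewrite /= b2 b3 b5 b6 !inE !eqxx !orbT.
  have := map_f tail yf; rewrite ty => vf.
  by move=> /allP /(_ _ vf); rewrite !inE (negbTE vC).
have cS : #|S| = 2 by [].
have v14 : v1 != v4 by apply: contraTneq (subset_leq_card sub) => ->; rewrite cS setUid cards1.
have E : S = [set v1; v4] by apply/eqP; rewrite eqEcard sub cS cards2 v14.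
have white_S v : v \in [set v1; v4] -> v \notin C by rewrite -E inE => /andP[].
by split; rewrite ?white_S // !inE eqxx ?orbT.
Qed.

Lemma face_white_adj : [/\ adj v1 v2, adj v3 v4, adj v4 v5 & adj v6 v1].
Proof.
have a y : adj (tail y) (tail (fp y)) by rewrite (tail_fphi G); apply: adj_dart.
split; try apply: a.
by rewrite -[in X in adj _ X]face_closed; apply: a.
Qed.

Lemma face_black_distinct : [/\ v2 != v5, v2 != v6, v3 != v5 & v3 != v6].
Proof.
have [b2 b3 b5 b6] := face_black; have [w1 w4 v14] := face_white.
have [a12 a34 a45 a61] := face_white_adj.
split.
- apply: contra_neq v14 => E; apply: (unique_white_nbr G L b2) => //.
  + by rewrite (adj_sym G).
  + by rewrite E (adj_sym G).
- by have := hd_fphi_neq_tail G x5; rewrite face_closed (tail_fphi G d).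
- by rewrite eq_sym (tail_fphi G x3) (hd_fphi_neq_tail G).
- apply: contra_neq v14 => E; apply: (unique_white_nbr G L b3) => //.
  by rewrite E.
Qed.

Lemma opposite_face_disjoint y : fconnect fp (e x1) y -> fconnect fp d y -> False.
Proof.
have [b2 b3 b5 b6] := face_black; have [w1 w4 v14] := face_white.
have [_ _ d35 d36] := face_black_distinct.
move=> gy fy; have : fconnect fp d (e x1).
  by apply: connect_trans fy _; rewrite (fconnect_sym (fphi_inj G)).
have t1 : tail (e x1) = v3 by rewrite -(tail_fphi G).
have h1 : hd (e x1) = v2 by rewrite (edgeK G).
move/mem_face; rewrite !inE.
case/orP=> [/eqP E|]; first by move: w1; rewrite -E t1 b3.
case/orP=> [/eqP E|]; first by move: (hd_neq_tail G x1); rewrite -{1}E (edgeK G) eqxx.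
case/orP=> [/eqP E|]; first by move: w4; rewrite (tail_fphi G) -E h1 b2.
case/orP=> [/eqP E|]; first by move: w4; rewrite -E t1 b3.
case/orP=> /eqP E; first by move: d35; rewrite -E t1 eqxx.
by move: d36; rewrite -E t1 eqxx.
Qed.

Hypothesis next23 : next C v2 = v3.

Lemma next_v5 : next C v5 = v6.
Proof.
have [b2 b3 b5 b6] := face_black; have [w1 w4 v14] := face_white.
have [a12 a34 a45 a61] := face_white_adj; have [d25 d26 d35 d36] := face_black_distinct.
have : (next C v5 == v6) || (next C v6 == v5).
  by move: C56; rewrite /dart_in_C /cedge -(tail_fphi G x4) => /and3P[].
case/orP=> [/eqP // | /eqP n65]; exfalso.
have [|||i [A [B R]]] := rot_to_next2 (longest_uniq L) b2 b6;
  rewrite 1?eq_sym ?next23 ?n65 //.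
rewrite next23 n65 in R.
apply: (swapped_edge_not_longest G L w1 w4 a12 a34 a45 a61 (A := A) (B := B) v14).
  by rewrite -R perm_rot.
by rewrite -R rot_cycle (longest_adj L).
Qed.

Lemma longest_cycle_shape : exists P1 B1,
  let R := v2 :: v3 :: next C v3 :: P1 ++ v5 :: v6 :: rcons B1 (prev C v2) in
  [/\ perm_eq R C, cycle adj R, next C (next C v3) = head v5 P1
     & prev C (prev C v2) = last v6 B1].
Proof.
have [b2 b3 b5 b6] := face_black; have [w1 w4 v14] := face_white.
have [a12 a34 a45 a61] := face_white_adj; have [d25 d26 d35 d36] := face_black_distinct.
have UC := longest_uniq L.
have [|||i [A [B R]]] := rot_to_next2 UC b2 b5; rewrite 1?eq_sym ?next23 ?next_v5 //.
rewrite next23 next_v5 in R.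
have UR : uniq (rot i C) by rewrite rot_uniq.
have nR : next (rot i C) =1 next C := next_rot i UC.
case: A R => [|w3 P1] R; have U := UR; rewrite R in U.
  exfalso; apply: (white_detour G L w4 b3); first by rewrite (adj_sym G).
  by rewrite -nR R (next_cat_head (s1 := [:: v2]) U).
have w3E : next C v3 = w3 by rewrite -nR R (next_cat_head (s1 := [:: v2]) U).
case/lastP: B R U => [|B1 w2] R U.
  exfalso; apply: (white_detour G L w1 b6); first by rewrite (adj_sym G).
  by have := next_last U; rewrite -R nR last_cons last_cat /= => ->.
have w2E : prev C v2 = w2.
  by rewrite -(prev_rot i UC) R prev_head -?R // last_cons last_cat /= last_rcons.
have E : rot i C = (v2 :: v3 :: (w3 :: P1) ++ v5 :: belast v6 B1) ++ [:: last v6 B1; w2].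
  have E0 : v6 :: rcons B1 w2 = belast v6 B1 ++ [:: last v6 B1; w2].
    by rewrite -rcons_cons lastI -!cats1 -catA.
  by rewrite R E0 /= -catA.
exists P1, B1; rewrite w3E w2E -R; split.
- by rewrite perm_rot.
- by rewrite rot_cycle (longest_adj L).
- by rewrite -nR R (next_cat_head (s1 := [:: v2; v3]) U) //; case: (P1).
have nl : next C (last v6 B1) = w2 by rewrite -nR E next_cat_head // -E.
by rewrite -nl (prev_next UC).
Qed.

Local Notation w2 := (prev C v2).
Local Notation w3 := (next C v3).

Lemma hd_vrot_x1 : hd (n x1) = w2.
Proof.
have [b2 _ _ _] := face_black; have [w1 _ _] := face_white.
have := adj_prev G L b2; rewrite {1}(tail_fphi G d) => /(adj_nbrs G).
rewrite !inE (edgeK G) => /or3P[]/eqP E //.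
- by move: w1; rewrite -E mem_prev b2.
- by move: (next_neq_prev L b2); rewrite E -(tail_fphi G) next23 eqxx.
Qed.

Lemma hd_vrot_x2 : hd (n x2) = w3.
Proof.
have [_ b3 _ _] := face_black; have [_ w4 _] := face_white.
have := adj_next L b3; rewrite {1}(tail_fphi G x1) => /(adj_nbrs G).
rewrite !inE (edgeK G) => /or3P[]/eqP E //.
- by move: (next_neq_prev L b3); rewrite E -next23 (prev_next (longest_uniq L)) eqxx.
- by move: w4; rewrite (tail_fphi G x2) -E mem_next b3.
Qed.

Lemma opposite_face_ends :
  [/\ tail (e x1) = v3, tail (fp (e x1)) = v2, tail (fp (fp (e x1))) = w2
     & forall z, fp z = e x1 -> tail z = w3 /\ hd z = v3].
Proof.
have fx1 : fp (e x1) = n x1 by rewrite /fphi (edgeK G).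
split.
- by rewrite (tail_fphi G x1).
- by rewrite fx1 (tail_vrot G).
- by rewrite (tail_fphi G (fp _)) fx1 hd_vrot_x1.
move=> z /(fphi_edge G) ez.
by rewrite -[z in tail z](edgeK G) ez hd_vrot_x2 (tail_vrot G).
Qed.

Lemma adj_w2_neq_v1 c : adj w2 c -> c != v1.
Proof.
have [b2 _ _ _] := face_black; have [w1 _ _] := face_white.
have [a12 _ _ _] := face_white_adj.
move=> w2c; apply/eqP => E; apply: (white_detour G L w1 (y := w2)); rewrite ?mem_prev //.
- by rewrite -E (adj_sym G).
- by rewrite (next_prev (longest_uniq L)).
Qed.

Lemma adj_w3_neq_v4 c : adj c w3 -> c != v4.
Proof.
have [_ b3 _ _] := face_black; have [_ w4 _] := face_white.
have [_ a34 _ _] := face_white_adj.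
move=> cw3; apply/eqP => E; apply: (white_detour G L w4 b3); last by rewrite -E.
by rewrite (adj_sym G).
Qed.

(* [R] is C read from v2; the other face at v2v3 leaves C at w2 and returns at w3. *)
Section Bypass.
Variables P1 B1 : seq V.
Let R := v2 :: v3 :: w3 :: P1 ++ v5 :: v6 :: rcons B1 w2.
Hypotheses (RC : perm_eq R C) (Rcyc : cycle adj R).
Hypotheses (next_w3 : next C w3 = head v5 P1) (prev_w2 : prev C w2 = last v6 B1).

Lemma w2_neq_w3 : w2 != w3.
Proof.
have := perm_uniq RC; rewrite (longest_uniq L) => /and4P[_ _ + _].
by apply: contraNneq => ->; rewrite mem_cat !inE mem_rcons mem_head !orbT.
Qed.

Lemma no_white_bypass Q : all [predC C] Q -> uniq (Q ++ [:: v4; v1]) ->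
  path adj w2 (rcons Q w3) -> False.
Proof.
have [w1 w4 _] := face_white; have [a12 a34 a45 a61] := face_white_adj.
move=> QC UQ pQ; apply: (splice_not_longest G L w1 w4 a12 a34 a45 a61
  (A := w3 :: P1) (B := rcons B1 w2) RC Rcyc
  (U1 := rcons B1 w2) (U2 := [::]) (T1 := [::]) (T2 := w3 :: P1) (Q := Q)).
all: by rewrite ?cats0 ?last_rcons ?addn2.
Qed.

Lemma no_bypass_from_prev Q : all [predC C] Q -> uniq (Q ++ [:: v4; v1]) ->
  path adj (prev C w2) (rcons Q w3) -> False.
Proof.
have [w1 w4 _] := face_white; have [a12 a34 a45 a61] := face_white_adj.
move=> QC UQ pQ; apply: (splice_not_longest G L w1 w4 a12 a34 a45 a61
  (A := w3 :: P1) (B := rcons B1 w2) RC Rcyc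
  (U1 := B1) (U2 := [:: w2]) (T1 := [::]) (T2 := w3 :: P1) (Q := Q)).
all: by rewrite ?cats1 -?prev_w2 ?addn2.
Qed.

Lemma no_bypass_to_next Q : all [predC C] Q -> uniq (Q ++ [:: v4; v1]) ->
  path adj w2 (rcons Q (next C w3)) -> False.
Proof.
have [w1 w4 _] := face_white; have [a12 a34 a45 a61] := face_white_adj.
move=> QC UQ pQ; apply: (splice_not_longest G L w1 w4 a12 a34 a45 a61
  (A := w3 :: P1) (B := rcons B1 w2) RC Rcyc
  (U1 := rcons B1 w2) (U2 := [::]) (T1 := [:: w3]) (T2 := P1) (Q := Q)).
all: by rewrite ?cats0 ?last_rcons -?next_w3 ?addn2.
Qed.

Lemma no_pentagon_bypass a : adj w2 a -> adj a w3 -> a != v2 -> a != v3 -> False.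
Proof.
have [b2 b3 _ _] := face_black; have [_ _ v14] := face_white.
have v41 : v4 != v1 by rewrite eq_sym.
have UC := longest_uniq L.
have w2C : w2 \in C by rewrite mem_prev.
have w3C : w3 \in C by rewrite mem_next.
move=> w2a aw3 a2 a3; case aC: (a \in C); last first.
  apply: (no_white_bypass (Q := [:: a])); rewrite /= ?inE ?aC ?w2a ?aw3 //.
  by rewrite negb_or (adj_w3_neq_v4 aw3) (adj_w2_neq_v1 w2a) v41.
have aw2 : adj a w2 by rewrite (adj_sym G).
case/orP: (cedge_of_nbrs G L aC aw2 aw3 w2_neq_w3).
- rewrite cedge_sym => /(cedgeP L _ w2C) [E|E].
  + by move: a2; rewrite -E (next_prev UC) eqxx.
  + by apply: (no_bypass_from_prev (Q := [::])); rewrite /= ?inE ?E ?aw3 ?v41.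
- rewrite cedge_sym => /(cedgeP L _ w3C) [E|E].
  + by apply: (no_bypass_to_next (Q := [::])); rewrite /= ?inE ?E ?w2a ?v41.
  + by move: a3; rewrite -E (prev_next UC) eqxx.
Qed.

Lemma hexagon_bypass_black b a : adj w2 b -> adj b a -> adj a w3 ->
  b != v2 -> a != v3 -> a != b -> b != v4 -> a != v1 -> (b \in C) && (a \in C).
Proof.
have [b2 b3 _ _] := face_black; have [_ _ v14] := face_white.
have v41 : v4 != v1 by rewrite eq_sym.
have UC := longest_uniq L.
have w2C : w2 \in C by rewrite mem_prev.
have w3C : w3 \in C by rewrite mem_next.
move=> w2b ba aw3 b2' a3 ab b4 a1.
have b1 := adj_w2_neq_v1 w2b; have a4 := adj_w3_neq_v4 aw3.
case bC: (b \in C); case aC: (a \in C) => //; exfalso.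
- have bw2 : adj b w2 by rewrite (adj_sym G).
  have w2a : w2 != a by apply: contraFneq aC => <-.
  case/orP: (cedge_of_nbrs G L bC bw2 ba w2a); last by rewrite /cedge aC andbF.
  rewrite cedge_sym => /(cedgeP L _ w2C) [E|E].
  + by move: b2'; rewrite -E (next_prev UC) eqxx.
  + apply: (no_bypass_from_prev (Q := [:: a])); rewrite /= ?inE ?aC ?E ?ba ?aw3 //.
    by rewrite negb_or a4 a1 v41.
- have ab' : adj a b by rewrite (adj_sym G).
  have w3b : w3 != b by apply: contraFneq bC => <-.
  case/orP: (cedge_of_nbrs G L aC aw3 ab' w3b); last by rewrite /cedge bC andbF.
  rewrite cedge_sym => /(cedgeP L _ w3C) [E|E].
  + apply: (no_bypass_to_next (Q := [:: b])); rewrite /= ?inE ?bC ?E ?w2b ?ba //.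
    by rewrite negb_or b4 b1 v41.
  + by move: a3; rewrite -E (prev_next UC) eqxx.
apply: (no_white_bypass (Q := [:: b; a])); rewrite /= ?inE ?aC ?bC ?w2b ?ba ?aw3 //.
by rewrite !negb_or eq_sym ab b4 b1 a4 a1 v41.
Qed.
End Bypass.

Lemma w2_neq_v3 : w2 != v3.
Proof. by have [b2 _ _ _] := face_black; rewrite eq_sym -{1}next23 (next_neq_prev L b2). Qed.

Lemma w3_neq_v2 : w3 != v2.
Proof.
have [_ b3 _ _] := face_black.
by rewrite -[v2 in _ != v2](prev_next (longest_uniq L)) next23 (next_neq_prev L b3).
Qed.

Lemma w2_neq_v5 : w2 != v5.
Proof.
have [_ d26 _ _] := face_black_distinct.
by apply: contraNneq d26 => E; rewrite -next_v5 -E (next_prev (longest_uniq L)).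
Qed.

Lemma w3_neq_v6 : w3 != v6.
Proof.
have [_ _ d35 _] := face_black_distinct.
apply: contraNneq d35 => E.
by rewrite -(prev_next (longest_uniq L) v3) E -next_v5 (prev_next (longest_uniq L)).
Qed.

Lemma opposite_face_not_pentagon : order fp (e x1) != 5.
Proof.
have [P1 [B1 [RC Rcyc nw3 pw2]]] := longest_cycle_shape.
have [_ t1 t2 tz] := opposite_face_ends.
apply/eqP => ord; have := iter_order (fphi_inj G) (e x1); rewrite ord /= => closed.
have [tw3 hv3] := tz _ closed.
set y1 := fp (e x1) in t1 t2 closed; set y2 := fp y1 in t2 closed.
set y3 := fp y2 in closed tw3 hv3.
apply: (no_pentagon_bypass RC Rcyc nw3 pw2 (a := hd y2)).
- by rewrite -t2; apply: adj_dart.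
- by rewrite -tw3 (tail_fphi G y3) -(tail_fphi G y2); apply: adj_dart.
- by rewrite -t1 (hd_fphi_neq_tail G).
- by rewrite -hv3 -(tail_fphi G y2) eq_sym (hd_fphi_neq_tail G).
Qed.

Lemma opposite_dart_shared y x : fconnect fp (e x1) y -> fconnect fp d x ->
  tail y = tail x -> hd y = hd x -> False.
Proof.
by move=> gy fx ty hy; apply: (opposite_face_disjoint gy); rewrite (dart_inj G ty hy).
Qed.

Lemma opposite_dart_tail_neq_v4 y : fconnect fp (e x1) y -> adj w2 (tail y) ->
  hd y != v3 -> hd y != w2 -> tail y != v4.
Proof.
have [_ a34 a45 _] := face_white_adj; have [_ _ d35 _] := face_black_distinct.
move=> gy w2y y3 yw2; apply/eqP => E.
have v4w2 : adj v4 w2 by rewrite -E (adj_sym G).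
have a43 : adj v4 v3 by rewrite (adj_sym G).
have v3w2 : v3 != w2 by rewrite eq_sym w2_neq_v3.
have v5w2 : v5 != w2 by rewrite eq_sym w2_neq_v5.
have v4y : adj v4 (hd y) by rewrite -E; apply: adj_dart.
case: (cubic_adj G a43 a45 v4w2 v4y d35 v3w2 v5w2) => E'.
- by rewrite E' eqxx in y3.
- by apply: (opposite_dart_shared gy (fconnect_iter fp 3 d)); rewrite // E' (tail_fphi G).
- by rewrite E' eqxx in yw2.
Qed.

Lemma opposite_dart_hd_neq_v1 y : fconnect fp (e x1) y -> adj (hd y) w3 ->
  tail y != v2 -> tail y != w3 -> hd y != v1.
Proof.
have [a12 _ _ a61] := face_white_adj; have [_ d26 _ _] := face_black_distinct.
move=> gy yw3 y2 yw3'; apply/eqP => E.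
have v1w3 : adj v1 w3 by rewrite -E.
have a16 : adj v1 v6 by rewrite (adj_sym G).
have v2w3 : v2 != w3 by rewrite eq_sym w3_neq_v2.
have v6w3 : v6 != w3 by rewrite eq_sym w3_neq_v6.
have v1y : adj v1 (tail y) by rewrite -E (adj_sym G); apply: adj_dart.
case: (cubic_adj G a12 a16 v1w3 v1y d26 v2w3 v6w3) => E'.
- by rewrite E' eqxx in y2.
- apply: (opposite_dart_shared gy (fconnect_iter fp 5 d)) => //.
  by rewrite E -{1}face_closed (tail_fphi G).
- by rewrite E' eqxx in yw3'.
Qed.

Lemma opposite_hexagon_black : order fp (e x1) = 6 -> black_face tail e n C (e x1).
Proof.
have [P1 [B1 [RC Rcyc nw3 pw2]]] := longest_cycle_shape.
have [t0 t1 t2 tz] := opposite_face_ends; have [b2 b3 _ _] := face_black.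
move=> ord; have := iter_order (fphi_inj G) (e x1); rewrite ord /= => closed.
have [tw3 hv3] := tz _ closed.
have y3g : fconnect fp (e x1) (iter 3 fp (e x1)) := fconnect_iter fp 3 (e x1).
set y1 := fp (e x1) in t1 t2 closed y3g; set y2 := fp y1 in t2 closed y3g.
set y3 := fp y2 in closed y3g; set y4 := fp y3 in closed tw3 hv3.
set b := hd y2; set a := hd y3.
have tb : tail y3 = b := tail_fphi G y2.
have ta : tail y4 = a := tail_fphi G y3.
have w2b : adj w2 b by rewrite -t2; apply: adj_dart.
have ba : adj b a by rewrite -tb; apply: adj_dart.
have aw3 : adj a w3 by rewrite -tw3 (tail_fphi G y4) -ta; apply: adj_dart.
have b_v2 : b != v2 by rewrite -t1 (hd_fphi_neq_tail G).
have a_v3 : a != v3 by rewrite -hv3 -ta eq_sym (hd_fphi_neq_tail G).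
have a_w2 : a != w2 by rewrite -t2 (hd_fphi_neq_tail G).
have b_w3 : b != w3 by rewrite -tw3 (tail_fphi G y4) -tb eq_sym (hd_fphi_neq_tail G).
have ab : a != b by rewrite -tb (hd_neq_tail G).
have b_v4 : b != v4 by rewrite -tb opposite_dart_tail_neq_v4 // tb.
have a_v1 : a != v1 by rewrite opposite_dart_hd_neq_v1 // tb.
have /andP[bC aC] := hexagon_bypass_black RC Rcyc nw3 pw2 w2b ba aw3 b_v2 a_v3 ab b_v4 a_v1.
have tails_black : all (mem C) [seq tail y | y <- orbit fp (e x1)].
  rewrite /orbit ord /= -/y1 -/y2 -/y3 -/y4 t0 t1 t2 tb ta tw3.
  by rewrite b2 b3 mem_prev b2 bC aC mem_next b3.
rewrite /black_face /nwhite; apply/eqP/eq_card0 => v; rewrite !inE /white.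
apply/negP => /andP[/negP vC /existsP[y /andP[gy /eqP ty]]]; apply: vC.
rewrite -ty; apply: (allP tails_black); apply: map_f.
by rewrite -fconnect_orbit.
Qed.

Lemma opposite_face_black_oriented : black_face tail e n C (e x1) && (order fp (e x1) == 6).
Proof.
case/orP: (order_fphi G (e x1)) => ord; first by rewrite (negbTE opposite_face_not_pentagon) in ord.
by rewrite ord opposite_hexagon_black // (eqP ord).
Qed.
End Face.

Section Reversal.
Variables (V D : finType) (tail : D -> V) (e n : D -> D) (C : seq V).
Hypotheses (G : fullerene tail e n) (L : longest_cycle tail e C).

Lemma longest_rev : longest_cycle tail e (rev C).
Proof.
have [/and3P[U s c] M] := L; split.
  rewrite /is_gcycle rev_uniq size_rev U s rev_cycle /=.
  by apply: sub_cycle c => x y; rewrite (adj_sym G).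
by move=> c' /M; rewrite size_rev.
Qed.

Lemma nwhite_rev x : nwhite tail e n (rev C) x = nwhite tail e n C x.
Proof. by apply: eq_card => v; rewrite !inE /white mem_rev. Qed.

Lemma cedge_rev : cedge (rev C) =2 cedge C.
Proof.
have U := longest_uniq L; move=> u v.
have prevE x y : (prev C x == y) = (next C y == x).
  by rewrite (can2_eq (next_prev U) (prev_next U)) eq_sym.
by rewrite /cedge !mem_rev !(next_rev U) !prevE orbC.
Qed.
End Reversal.

Section Charge.
Variables (V D : finType) (tail : D -> V) (e n : D -> D) (C : seq V).
Hypothesis G : fullerene tail e n.
Local Notation fp := (fphi e n).
Local Notation hd x := (tail (e x)).
Local Notation nwhite := (nwhite tail e n C).
Local Notation dart_in_C := (dart_in_C tail e C).
Local Notation transfer := (transfer tail e n C).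

Lemma nwhite_fconnect x y : fconnect fp x y -> nwhite y = nwhite x.
Proof.
move=> xy; apply: eq_card => v; rewrite !inE; congr (_ && _).
apply/existsP/existsP => -[z /andP[cz tz]]; exists z; rewrite tz andbT.
- exact: connect_trans xy cz.
- by rewrite -(same_connect (fconnect_sym (fphi_inj G)) xy).
Qed.

Lemma dart_in_C_edge y : dart_in_C (e y) = dart_in_C y.
Proof. by rewrite /dart_in_C (edgeK G) cedge_sym. Qed.

Lemma dart_in_C_white y : (tail y \notin C) || (hd y \notin C) -> ~~ dart_in_C y.
Proof. by rewrite /dart_in_C /cedge; case: (tail y \in C); case: (hd y \in C). Qed.

Lemma transfer_not_black y : ~~ black_face tail e n C y -> transfer y = 0%R.
Proof. by rewrite /transfer /ruleA /ruleB => /negbTE ->; rewrite GRing.addr0. Qed.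

Lemma transfer_edge_not_in_C y : ~~ dart_in_C y -> transfer (e y) = 0%R.
Proof.
by rewrite -dart_in_C_edge /transfer /ruleA /ruleB => /negbTE ->; rewrite !andbF GRing.addr0.
Qed.

Lemma final_charge_not_black x : ~~ black_face tail e n C x ->
  final_charge tail e n C x = ((nwhite x)%:R - \sum_(y <- orbit fp x) transfer (e y))%R.
Proof.
move=> nblack; rewrite /final_charge (eq_bigl (fun y => y \in orbit fp x)) => [|y]; last first.
  by rewrite fconnect_orbit.
rewrite -big_uniq ?orbit_uniq // -GRing.sumrN; congr (_ + _)%R.
apply: eq_big_seq => y; rewrite -fconnect_orbit => /nwhite_fconnect xy.
by rewrite transfer_not_black ?GRing.add0r // /black_face xy.
Qed.
End Charge.

Section OppositeFace.
Variables (V D : finType) (tail : D -> V) (e n : D -> D) (C : seq V) (d : D).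
Hypotheses (G : fullerene tail e n) (L : longest_cycle tail e C).
Local Notation fp := (fphi e n).
Local Notation x1 := (fp d).
Local Notation x2 := (fp x1).
Hypotheses (hexagon : order fp d = 6) (two_white : nwhite tail e n C d = 2).
Hypotheses (C23 : dart_in_C tail e C x1) (C56 : dart_in_C tail e C (iter 4 fp d)).

(* If C runs v3 -> v2 instead, apply the oriented case to [rev C]. *)
Lemma opposite_face_black : black_face tail e n C (e x1) && (order fp (e x1) == 6).
Proof.
have U := longest_uniq L.
have := C23; rewrite /dart_in_C /cedge -(tail_fphi G x1) => /and3P[_ _ /orP[]/eqP o].
  exact: opposite_face_black_oriented G L hexagon two_white C23 C56 o.
have rev_next : next (rev C) (tail x1) = tail x2 by rewrite (next_rev U) -o (prev_next U).
have := opposite_face_black_oriented G (longest_rev G L) hexagon _ _ _ rev_next.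
by rewrite /black_face !nwhite_rev /dart_in_C !(cedge_rev L); apply.
Qed.

Lemma transfer_opposite : transfer tail e n C (e x1) = (1 / 2)%R.
Proof.
have [b2 b3 _ _] := face_black G C23 C56; have [w1 w4 _] := face_white G hexagon two_white C23 C56.
have /andP[black ord6] := opposite_face_black.
have next_in_C : dart_in_C tail e C (fp (e x1)).
  have b2' : tail (e d) \in C by move: b2; rewrite (tail_fphi G d).
  have := cedge_other_nbrs G L b2'; rewrite (edgeK G) => /(_ w1) /andP[_].
  by rewrite /dart_in_C /fphi (edgeK G) !(tail_vrot G).
have prev_in_C : dart_in_C tail e C (finv fp (e x1)).
  rewrite -(dart_in_C_edge C G) (fphi_edge G (f_finv (fphi_inj G) _)).
  have w4' : tail (e x2) \notin C by move: w4; rewrite (tail_fphi G x2).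
  have /andP[+ _] := cedge_other_nbrs G L b3 w4'.
  by rewrite /dart_in_C /fphi !(tail_vrot G).
have white_opp : white_face tail e n C (e (e x1)).
  by rewrite (edgeK G) /white_face (nwhite_fconnect C G (fconnect1 _ _)) two_white.
have C32 : dart_in_C tail e C (e x1) by rewrite (dart_in_C_edge C G).
rewrite /transfer /ruleA /ruleB black (eqP ord6) white_opp C32 prev_in_C next_in_C /=.
by rewrite GRing.addr0.
Qed.
End OppositeFace.

Theorem lemma3 (V D : finType) (tail : D -> V) (e n : D -> D) (C : seq V)
  (d : D) :
  fullerene tail e n ->
  longest_cycle tail e C ->
  order (fphi e n) d = 6 ->
  white_face tail e n C d ->
  dart_in_C tail e C (fphi e n d) ->
  dart_in_C tail e C (iter 4 (fphi e n) d) ->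
  final_charge tail e n C d = 1%R.
Proof.
move=> G L hexagon /eqP two_white C23 C56.
have [w1 w4 _] := face_white G hexagon two_white C23 C56.
have d_x3 : fconnect (fphi e n) d (iter 3 (fphi e n) d) := fconnect_iter _ 3 d.
have t23 := transfer_opposite G L hexagon two_white C23 C56.
have t56 : transfer tail e n C (e (iter 4 (fphi e n) d)) = (1 / 2)%R.
  apply: (transfer_opposite G L _ _ C56).
  - by rewrite (order_fconnect (fphi_inj G) d_x3).
  - by rewrite (nwhite_fconnect C G d_x3).
  - by rewrite /= (face_closed G hexagon).
have no_edge y : (tail y \notin C) || (tail (e y) \notin C) -> transfer tail e n C (e y) = 0%R.
  by move=> /dart_in_C_white /(transfer_edge_not_in_C G).
rewrite final_charge_not_black /black_face ?two_white // /orbit hexagon /=.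
have hd_x2 := w4; rewrite (tail_fphi G) in hd_x2.
have hd_x5 := w1; rewrite -{1}(face_closed G hexagon) (tail_fphi G) in hd_x5.
rewrite /= in t56; rewrite !big_cons big_nil t23 t56 !no_edge ?w1 ?w4 ?hd_x2 ?hd_x5 ?orbT //.
Qed.
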